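(* Let $n\ge 6$. For every $n$-vertex graph $G$, $$av_1(G)\le \frac n2+1,$$ with equality if and only if $G=K_2\cup(n-2)K_1$, i.e. $G$ consists of a single edge together with $n-2$ isolated vertices.
   Context: All graphs are finite and simple. For a graph $G=(V,E)$, a set $S\subseteq V$ is a $1$-nearly independent vertex set if the subgraph induced by $S$ has exactly one edge. $\sigma_1(G)$ is the number of such sets, $S_1(G)$ the sum of their sizes, and $av_1(G)=S_1(G)/\sigma_1(G)$, with $av_1(G)=0$ when $G$ has no edges. *)

From mathcomp Require Import all_boot all_order all_algebra.
Set Implicit Arguments. Unset Strict Implicit. Unset Printing Implicit Defensive.
Import Order.TTheory GRing.Theory Num.Theory.

Definition simple_graph (T : finType) (e : rel T) : Prop :=
  symmetric e /\ irreflexive e.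

Definition edges (T : finType) (e : rel T) : {set {set T}} :=
  [set E : {set T} | [exists x, exists y, (E == [set x; y]) && e x y]].

Definition n_edges_in (T : finType) (e : rel T) (S : {set T}) : nat :=
  #|[set E in edges e | E \subset S]|.

Definition nearly_indep1 (T : finType) (e : rel T) : {set {set T}} :=
  [set S : {set T} | n_edges_in e S == 1%N].

Definition sigma1 (T : finType) (e : rel T) : nat := #|nearly_indep1 e|.

Definition S1 (T : finType) (e : rel T) : nat :=
  \sum_(S in nearly_indep1 e) #|S|.

(* av_1(G) = S_1/sigma_1, and 0 if G has no edges (then sigma_1 = 0). *)
Definition av1 (T : finType) (e : rel T) : rat :=
  if sigma1 e == 0%N then 0%R else ((S1 e)%:R / (sigma1 e)%:R)%R.

(* If S is 1-nearly independent with edge uv, then S minus w is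
   again 1-nearly independent exactly when w lies in S but not in uv, so
   S1 = 2 sigma1 + sum_w a_w, where a_w counts the 1-nearly independent S that
   contain w and stay 1-nearly independent without it. Counting the pairs (w, S)
   with w outside S gives S1 = n sigma1 - sum_w c_w, where c_w counts the
   1-nearly independent sets avoiding w. Deleting w injects the sets counted by a_w
   into those counted by c_w, hence 2 S1 <= (n + 2) sigma1. Equality means that
   adding any w to a 1-nearly independent set avoiding w keeps it 1-nearly
   independent: true with one edge, false with two edges ab and cd where c is not
   in ab (add c to ab, and then d if ab + c is still 1-nearly independent). *)

From mathcomp Require Import all_boot all_order all_algebra.
From mathcomp Require Import zify ring.
Import Order.TTheory GRing.Theory Num.Theory.
Set Implicit Arguments. Unset Strict Implicit.

Lemma card_set_in (I : finType) (A : {pred I}) (P : pred I) :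
  #|[set i in A | P i]| = \sum_(i in A) P i.
Proof. by rewrite -sum1dep_card big_mkcondr. Qed.

Section NearlyIndependent.
Variables (T : finType) (e : rel T).

Lemma edgesP (E : {set T}) :
  reflect (exists x y, E = [set x; y] /\ e x y) (E \in edges e).
Proof.
rewrite inE; apply: (iffP existsP) => [[x /existsP [y /andP [/eqP -> exy]]]|].
  by exists x, y.
by move=> [x [y [-> exy]]]; exists x; apply/existsP; exists y; rewrite eqxx.
Qed.

Definition sole_edge (S E0 : {set T}) : Prop :=
  forall E, E \in edges e -> (E \subset S) = (E == E0).

Lemma nearly_indep1P (S : {set T}) :
  reflect (exists2 E0, E0 \in edges e & sole_edge S E0) (S \in nearly_indep1 e).
Proof.
rewrite inE /n_edges_in; apply: (iffP cards1P) => [[E0 hS]|[E0 E0e hS]].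
  have : E0 \in [set E in edges e | E \subset S] by rewrite hS set11.
  rewrite inE => /andP [E0e _]; exists E0 => // E Ee.
  by move/setP/(_ E): hS; rewrite in_set1 in_set Ee.
exists E0; apply/setP => E; rewrite in_set1 in_set.
have [Ee|Ene] := boolP (E \in edges e); first exact: hS.
by apply/esym/eqP => EE0; rewrite EE0 E0e in Ene.
Qed.

Lemma nearly_indep1_setD1 (S E0 : {set T}) w :
  E0 \in edges e -> sole_edge S E0 -> (S :\ w \in nearly_indep1 e) = (w \notin E0).
Proof.
move=> E0e hS; apply/nearly_indep1P/idP => [[E1 E1e hSw]|wE0].
  have : E1 \subset S :\ w by rewrite hSw.
  by rewrite subsetD1 hS // => /andP [/eqP <-].
exists E0 => // E Ee; rewrite subsetD1 hS //.
by have [->|] := eqVneq E E0; rewrite ?wE0.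
Qed.

Definition removable (w : T) :=
  [set S in nearly_indep1 e | (w \in S) && (S :\ w \in nearly_indep1 e)].

Definition avoiding (w : T) := [set S in nearly_indep1 e | w \notin S].

Lemma S1_avoiding : S1 e + \sum_w #|avoiding w| = #|T| * sigma1 e.
Proof.
rewrite /S1 -sum_nat_const.
rewrite (eq_bigr (fun S : {set T} => \sum_w (w \in S : nat))) => [|S _]; last first.
  by rewrite -sum1_card big_mkcond.
rewrite exchange_big /= -big_split /=; apply: eq_bigr => w _.
rewrite card_set_in -big_split /= /sigma1 -sum1_card.
by apply: eq_bigr => S _; case: (w \in S).
Qed.

Lemma removable_imset_sub w :
  (fun S => S :\ w) @: removable w \subset avoiding w.
Proof.
apply/subsetP => X /imsetP [S]; rewrite !inE => /and3P [_ _ SwN] ->.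
by rewrite SwN setD11.
Qed.

Lemma card_removable_imset w :
  #|(fun S => S :\ w) @: removable w| = #|removable w|.
Proof.
apply: card_in_imset => S1 S2; rewrite !inE => /and3P [_ wS1 _] /and3P [_ wS2 _].
by move=> eqSw; rewrite -(setD1K wS1) -(setD1K wS2) eqSw.
Qed.

Lemma card_removable_le w : #|removable w| <= #|avoiding w|.
Proof. by rewrite -card_removable_imset subset_leq_card ?removable_imset_sub. Qed.

Lemma card_removable_lt w (X : {set T}) :
  X \in nearly_indep1 e -> w \notin X -> w |: X \notin nearly_indep1 e ->
  #|removable w| < #|avoiding w|.
Proof.
move=> XN wX wXN; rewrite -card_removable_imset proper_card //.
apply/properP; split; first exact: removable_imset_sub.
exists X; first by rewrite inE XN wX.
apply/imsetP => -[S]; rewrite in_set => /and3P [SN wS _] XS.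
by move: wXN; rewrite XS setD1K ?SN.
Qed.

Lemma nearly_indep1_setU1 (X : {set T}) w :
  #|edges e| <= 1 -> X \in nearly_indep1 e -> w |: X \in nearly_indep1 e.
Proof.
move=> /card_le1_eqP edges_eq /nearly_indep1P [E0 E0e hX].
have E0X : E0 \subset X by rewrite hX ?eqxx.
apply/nearly_indep1P; exists E0 => // E Ee.
have -> : E = E0 by apply: edges_eq.
by rewrite eqxx (subset_trans E0X) ?subsetUr.
Qed.

Lemma card_removable_eq w : #|edges e| <= 1 -> #|removable w| = #|avoiding w|.
Proof.
move=> le1; apply/eqP; rewrite eqn_leq card_removable_le -card_removable_imset.
apply/subset_leq_card/subsetP => X; rewrite inE => /andP [XN wX].
apply/imsetP; exists (w |: X); last by rewrite setU1K.
by rewrite in_set nearly_indep1_setU1 // setU11 setU1K.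
Qed.

Hypothesis simple_e : simple_graph e.

Lemma card_edge (E : {set T}) : E \in edges e -> #|E| = 2.
Proof.
case/edgesP => x [y [-> exy]]; rewrite cards2.
by case: eqP exy => [->|]; rewrite ?simple_e.2.
Qed.

Lemma edge_subset_eq (E1 E2 : {set T}) :
  E1 \in edges e -> E2 \in edges e -> E1 \subset E2 -> E1 = E2.
Proof.
by move=> E1e E2e sE12; apply/eqP; rewrite eqEcard sE12 !card_edge.
Qed.

Lemma edge_nearly_indep1 (E : {set T}) : E \in edges e -> E \in nearly_indep1 e.
Proof.
move=> Ee; apply/nearly_indep1P; exists E => // E' E'e.
by apply/idP/eqP => [|->//]; apply: edge_subset_eq.
Qed.

Lemma card_nearly_indep1 (S : {set T}) :
  S \in nearly_indep1 e -> #|S| = #|[set w in S | S :\ w \in nearly_indep1 e]| + 2.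
Proof.
case/nearly_indep1P => E0 E0e hS.
have -> : [set w in S | S :\ w \in nearly_indep1 e] = S :\: E0.
  by apply/setP => w; rewrite in_set (nearly_indep1_setD1 _ E0e hS) in_setD andbC.
have E0S : E0 \subset S by rewrite hS ?eqxx.
rewrite cardsD (setIidPr E0S) (card_edge E0e) subnK //.
by rewrite -(card_edge E0e) subset_leq_card.
Qed.

Lemma S1_removable : S1 e = \sum_w #|removable w| + 2 * sigma1 e.
Proof.
rewrite /S1 /sigma1 (eq_bigr _ card_nearly_indep1) big_split /=.
rewrite sum_nat_const mulnC; congr (_ + _).
rewrite (eq_bigr (fun S : {set T} =>
                    \sum_w ((w \in S) && (S :\ w \in nearly_indep1 e) : nat)))
  => [|S _]; last first.
  by rewrite card_set_in big_mkcond; apply: eq_bigr => w _; case: (w \in S).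
by rewrite exchange_big; apply: eq_bigr => w _; rewrite card_set_in.
Qed.

Lemma nearly_indep1_two_edges (E1 E2 S : {set T}) :
  E1 \in edges e -> E2 \in edges e -> E1 != E2 ->
  E1 \subset S -> E2 \subset S -> S \notin nearly_indep1 e.
Proof.
move=> E1e E2e neqE E1S E2S; apply/nearly_indep1P => -[E0 _ hS].
rewrite hS // in E1S; rewrite hS // in E2S.
by rewrite (eqP E1S) (eqP E2S) eqxx in neqE.
Qed.

Lemma nonextendable_of_edge (E : {set T}) c d :
  E \in edges e -> e c d -> c \notin E ->
  exists w X, [/\ X \in nearly_indep1 e, w \notin X & w |: X \notin nearly_indep1 e].
Proof.
move=> Ee ecd cE.
have cde : [set c; d] \in edges e by apply/edgesP; exists c, d.
have neqE : E != [set c; d] by apply: contraNneq cE => ->; rewrite set21.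
have [cEN|] := boolP (c |: E \in nearly_indep1 e); last first.
  by exists c, E; split => //; apply: edge_nearly_indep1.
exists d, (c |: E); split => //.
  apply: contraL cEN => dcE; apply: (nearly_indep1_two_edges Ee cde neqE).
    exact: subsetUr.
  by rewrite subUset !sub1set setU11.
apply: (nearly_indep1_two_edges Ee cde neqE).
  by rewrite (subset_trans (subsetUr [set c] E)) ?subsetUr.
by rewrite subUset !sub1set !inE !eqxx !orbT.
Qed.

Lemma exists_nonextendable :
  1 < #|edges e| ->
  exists w X, [/\ X \in nearly_indep1 e, w \notin X & w |: X \notin nearly_indep1 e].
Proof.
case/card_gt1P => E [E' [Ee E'e neqE]].
case/edgesP: (E'e) => c [d [defE' ecd]].
have [cE|cE] := boolP (c \in E); last exact: nonextendable_of_edge Ee ecd cE.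
have [dE|dE] := boolP (d \in E).
  case/eqP: neqE; apply/esym/edge_subset_eq => //.
  by rewrite defE' subUset !sub1set cE dE.
have edc : e d c by rewrite simple_e.1.
exact: nonextendable_of_edge Ee edc dE.
Qed.

Lemma S1_double_count :
  (S1 e).*2 + \sum_w #|avoiding w| =
  \sum_w #|removable w| + (#|T| + 2) * sigma1 e.
Proof.
by rewrite -addnn {1}S1_removable -addnA S1_avoiding mulnDl addnAC addnA.
Qed.

Lemma S1_bound : (S1 e).*2 <= (#|T| + 2) * sigma1 e.
Proof.
have AC : \sum_w #|removable w| <= \sum_w #|avoiding w|.
  by apply: leq_sum => w _; apply: card_removable_le.
have := S1_double_count; lia.
Qed.

Lemma S1_bound_eq : ((S1 e).*2 == (#|T| + 2) * sigma1 e) = (#|edges e| <= 1).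
Proof.
have := S1_double_count; have [le1|gt1] := leqP #|edges e| 1.
  rewrite (eq_bigr _ (fun w _ => card_removable_eq w le1)) => ?; apply/eqP; lia.
have [w [X [XN wX wXN]]] := exists_nonextendable gt1.
have : \sum_w #|removable w| < \sum_w #|avoiding w|.
  rewrite (bigD1 w) //= [X in _ < X](bigD1 w) //=.
  rewrite -addSn leq_add ?(card_removable_lt XN wX wXN) //.
  by apply: leq_sum => v _; apply: card_removable_le.
move=> ? ?; apply/negbTE/eqP; lia.
Qed.

Lemma sigma1_gt0 : (0 < sigma1 e) = (0 < #|edges e|).
Proof.
apply/card_gt0P/card_gt0P => [[S /nearly_indep1P [E0 E0e _]]|[E Ee]].
  by exists E0.
by exists E; apply: edge_nearly_indep1.
Qed.

End NearlyIndependent.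

Local Open Scope ring_scope.

Lemma av1_le_half (T : finType) (e : rel T) (m : nat) :
  ((S1 e).*2 <= m * sigma1 e)%N -> av1 e <= m%:R / 2.
Proof.
rewrite /av1; case: eqP => [_ _|/eqP s0 le2S1]; first exact: divr_ge0.
rewrite ler_pdivrMr ?ltr0n ?lt0n // mulrAC ler_pdivlMr //.
by rewrite -!natrM ler_nat muln2.
Qed.

Lemma av1_eq_half (T : finType) (e : rel T) (m : nat) : (0 < m)%N ->
  av1 e = m%:R / 2 <-> (0 < sigma1 e)%N && ((S1 e).*2 == m * sigma1 e)%N.
Proof.
move=> m_gt0; rewrite /av1 lt0n; case: eqP => [_|/eqP s0] /=.
  split=> // /eqP; rewrite eq_sym mulf_eq0 invr_eq0 !pnatr_eq0.
  by case: m m_gt0.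
apply: iff_trans (rwP eqP) _.
by rewrite eqr_div ?pnatr_eq0 // -!natrM eqr_nat muln2.
Qed.

Theorem mainTheorem9 (n : nat) (e : rel 'I_n) :
  (6 <= n)%N -> simple_graph e ->
  av1 e <= n%:R / 2 + 1 /\
  (av1 e = n%:R / 2 + 1 <-> #|edges e| = 1%N).
Proof.
move=> _ simple_e.
have -> : n%:R / 2 + 1 = (n + 2)%:R / 2 :> rat by rewrite natrD; field.
have := S1_bound simple_e; have := S1_bound_eq simple_e; rewrite card_ord.
move=> S1_eq S1_le; split; first exact: av1_le_half.
apply: iff_trans (av1_eq_half _ _) _; first by rewrite addn2.
rewrite sigma1_gt0 // S1_eq.
by split => [/andP [] | ->] //; lia.
Qed.
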